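(* Consider the linear system $x_{k+1}=Ax_k+Bu_k+w_k$ with $x_k\in\mathbb{R}^n$, $u_k\in\mathbb{R}^d$, $w_k\in\mathcal{W}$, subject to convex polytopic constraints $x_k\in\mathcal{X}$, $u_k\in\mathcal{U}$. Let $K$ and $\mathcal{O}$ satisfy: for all $x\in\mathcal{O}$, $w\in\mathcal{W}$, $(A+BK)x+w\in\mathcal{O}$ and $Kx\in\mathcal{U}$. Let $h:\mathbb{R}^n\times\mathbb{R}^d\to\mathbb{R}$ be a continuous, jointly convex stage cost. Fix $j\ge0$. For each $i\in\{0,\dots,j\}$ let $\pi^i$ be a control policy with values in $\mathcal{U}$, defined on a set $\mathcal{F}^i\subseteq\mathcal{X}$ (and at all points of $\mathcal{SS}^i$ where it is evaluated), and let $x_0^i\in\mathcal{F}^i$. Assume that for every $i\in\{0,\dots,j\}$ and every initial condition in $\mathcal{F}^i$, the closed loop $x_{k+1}=Ax_k+B\pi^i(x_k)+w_k$ satisfies $x_k\in\mathcal{X}$ for all $k$ and $|x_t|_{\mathcal{O}}\to0$ as $t\to\infty$, for every disturbance sequence in $\mathcal{W}$. Then $Q^j$ is a robust control Lyapunov function on $\mathcal{CS}^j$, i.e. for all $x\in\mathcal{CS}^j$, $$\min_{u\in\mathcal{U}}\max_{w\in\mathcal{W}}\big[Q^j(Ax+Bu+w)+h(x,u)-Q^j(x)\big]\le 0.$$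
   Context: $|x|_{\mathcal{O}}=\inf_{d\in\mathcal{O}}\|x-d\|_1$. For $i\ge0$: robust reachable sets $\mathcal{R}_0(x_0^i)=\{x_0^i\}$, $\mathcal{R}_{k+1}(x_0^i)=\{x'\in\mathcal{X}:\exists w\in\mathcal{W},\exists x\in\mathcal{R}_k(x_0^i),\ x'=Ax+B\pi^i(x)+w\}$; safe set $\mathcal{SS}^i=\big(\bigcup_{k\ge0}\mathcal{R}_k(x_0^i)\big)\cup\mathcal{O}$; convex safe set $\mathcal{CS}^j=\mathrm{conv}\big(\bigcup_{i=0}^j\mathcal{SS}^i\big)$. The worst-case cost-to-go $L^i:\mathbb{R}^n\to\mathbb{R}\cup\{+\infty\}$ is $L^i(x)=+\infty$ for $x\notin\mathcal{SS}^i$, and for $x\in\mathcal{SS}^i$ it is the solution of $L^i(x)=\max_{w\in\mathcal{W}}\big[h(x,\pi^i(x))+L^i(Ax+B\pi^i(x)+w)\big]$ (the worst-case cumulative closed-loop cost from $x$ under $\pi^i$). The function $Q^j:\mathcal{CS}^j\to\mathbb{R}$ is $Q^j(x)=\min\{\mu: (x,\mu)\in\mathrm{conv}\big(\bigcup_{i=0}^j\mathrm{epi}(L^i)\big)\}$, where $\mathrm{epi}$ denotes the epigraph. *)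

From HB Require Import structures.
From mathcomp Require Import all_boot all_order all_algebra.
From mathcomp Require Import all_classical all_reals all_analysis.
Set Implicit Arguments. Unset Strict Implicit. Unset Printing Implicit Defensive.
Import Order.TTheory GRing.Theory Num.Theory.
Import numFieldNormedType.Exports.
Local Open Scope classical_set_scope.
Local Open Scope ring_scope.

Section Defs.
Variable R : realType.

Definition conv (V : lmodType R) (S : set V) : set V :=
  [set y | exists (m : nat) (lam : 'I_m -> R) (p : 'I_m -> V),
      [/\ (forall k, 0 <= lam k), \sum_(k < m) lam k = 1,
          (forall k, S (p k)) & y = \sum_(k < m) lam k *: p k]].

Definition polytope (V : lmodType R) (S : set V) : Prop :=
  exists (m : nat) (p : 'I_m -> V), S = conv (range p).

Variables n d : nat.

Definition norm1 (v : 'cV[R]_n) : R := \sum_(i < n) `|v i ord0|.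

Definition distO (O : set 'cV[R]_n) (x : 'cV[R]_n) : R :=
  inf [set norm1 (x - y) | y in O].

Fixpoint traj (A : 'M[R]_n) (B : 'M[R]_(n, d)) (pi : 'cV[R]_n -> 'cV[R]_d)
    (x0 : 'cV[R]_n) (w : nat -> 'cV[R]_n) (k : nat) : 'cV[R]_n :=
  match k with
  | 0 => x0
  | k'.+1 => let x := traj A B pi x0 w k' in A *m x + B *m pi x + w k'
  end.

Fixpoint reach (A : 'M[R]_n) (B : 'M[R]_(n, d)) (X W : set 'cV[R]_n)
    (pi : 'cV[R]_n -> 'cV[R]_d) (x0 : 'cV[R]_n) (k : nat) : set 'cV[R]_n :=
  match k with
  | 0 => [set x0]
  | k'.+1 => [set x' | X x' /\ exists2 w, W w &
                exists2 x, reach A B X W pi x0 k' x & x' = A *m x + B *m pi x + w]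
  end.

Definition safe_set A B X W pi x0 (O : set 'cV[R]_n) : set 'cV[R]_n :=
  (\bigcup_(k in [set: nat]) reach A B X W pi x0 k) `|` O.

Definition conv_safe_set A B X W (pi : nat -> 'cV[R]_n -> 'cV[R]_d)
    (x0 : nat -> 'cV[R]_n) O (j : nat) : set 'cV[R]_n :=
  conv (\bigcup_(i in [set i | (i <= j)%N]) safe_set A B X W (pi i) (x0 i) O).

Definition epi (L : 'cV[R]_n -> \bar R) : set ('cV[R]_n * R) :=
  [set p | (L p.1 <= p.2%:E)%E].

Definition conv_epi (L : nat -> 'cV[R]_n -> \bar R) (j : nat) : set ('cV[R]_n * R) :=
  conv (\bigcup_(i in [set i | (i <= j)%N]) epi (L i)).

(* Q^j(x) = min { mu | (x, mu) in conv (U_{i<=j} epi L^i) } (as an infimum;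
   that it is attained is the presupposition of the definition) *)
Definition Qfun (L : nat -> 'cV[R]_n -> \bar R) (j : nat) (x : 'cV[R]_n) : R :=
  inf [set mu | conv_epi L j (x, mu)].

End Defs.

(* Write (x, Q^j x) as a convex combination, with weights lam_k, of points
   (x_k, mu_k) of the epigraphs epi L^(i_k), and apply at x the same convex
   combination u of the inputs u_k = pi^(i_k)(x_k).  By the Bellman equation
   every successor point (A x_k + B u_k + w, mu_k - h(x_k, u_k)) lies again in
   epi L^(i_k).  As the dynamics are affine, their convex combination is
   (A x + B u + w, Q^j x - sum_k lam_k h(x_k, u_k)), and the sum is at least
   h(x, u) by Jensen's inequality.  The hull of the epigraphs being closed
   upwards, A x + B u + w lies in CS^j with Q^j (A x + B u + w) <= Q^j x - h(x, u). *)

From Pilot Require Import Defs.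
From HB Require Import structures.
From mathcomp Require Import all_boot all_order all_algebra.
From mathcomp Require Import all_classical all_reals all_analysis.
From mathcomp Require Import lra.
Import Order.TTheory GRing.Theory Num.Theory.
Import numFieldNormedType.Exports.
Local Open Scope classical_set_scope.
Local Open Scope ring_scope.
Set Implicit Arguments.
Unset Strict Implicit.
Unset Printing Implicit Defensive.

Section ConvexHull.
Variable R : realType.

Lemma convex_setP (V : lmodType R) (S : set V) :
  convex_set (S : set (convex_lmodType V)) <->
  forall a b (t : R), 0 <= t <= 1 -> S a -> S b -> S (t *: a + (1 - t) *: b).
Proof.
split=> [cS a b t /andP[t0 t1] Sa Sb | cS a b t].
  by have := cS a b (Itv01 t0 t1); rewrite !inE; apply.
by rewrite !inE => Sa Sb; apply: cS => //; rewrite ge0 le1.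
Qed.

Lemma convex_set_conv (V : lmodType R) (S : set V) :
  convex_set (Defs.conv S : set (convex_lmodType V)).
Proof.
apply/convex_setP => a b t /andP[t0 t1].
move=> [m1 [l1 [p1 [l10 l11 Sp1 ->]]]] [m2 [l2 [p2 [l20 l21 Sp2 ->]]]].
pose lam i := match fintype.split i with inl k => t * l1 k | inr k => (1 - t) * l2 k end.
pose p i := match fintype.split i with inl k => p1 k | inr k => p2 k end.
have splitl (k : 'I_m1) : fintype.split (lshift m2 k) = inl k := unsplitK (inl k).
have splitr (k : 'I_m2) : fintype.split (rshift m1 k) = inr k := unsplitK (inr k).
exists (m1 + m2)%N, lam, p; split.
- by move=> i; rewrite /lam; case: fintype.split => k; apply: mulr_ge0 => //; lra.
- rewrite big_split_ord /lam.
  under eq_bigr do rewrite splitl. under [\sum_(k < m2) _]eq_bigr do rewrite splitr.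
  by rewrite -!mulr_sumr l11 l21 !mulr1 /= subrKC.
- by move=> i; rewrite /p; case: fintype.split.
- rewrite big_split_ord /lam /p.
  under [in RHS]eq_bigr do rewrite splitl.
  under [X in _ = _ + X]eq_bigr do rewrite splitr.
  by rewrite !scaler_sumr; congr (_ + _); apply: eq_bigr => k _; rewrite scalerA.
Qed.

Lemma conv_sub_convex (V : lmodType R) (S : set V) :
  convex_set (S : set (convex_lmodType V)) -> Defs.conv S `<=` S.
Proof.
move/convex_setP=> cS _ [m [lam [p [lam_ge0 lam_sum Sp ->]]]].
elim: m lam p lam_ge0 lam_sum Sp => [|m IH] lam p lam_ge0 lam_sum Sp.
  by move: lam_sum; rewrite big_ord0 => /eqP; rewrite eq_sym oner_eq0.
rewrite big_ord_recr /=; rewrite big_ord_recr /= in lam_sum.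
set t := lam ord_max in lam_sum *.
set s := \sum_(i < m) lam (widen_ord (leqnSn m) i) in lam_sum.
have s_ge0 : 0 <= s by apply: sumr_ge0.
have [s0|s_neq0] := eqVneq s 0.
  have lam0 := psumr_eq0P (fun i _ => lam_ge0 (widen_ord (leqnSn m) i)) s0.
  rewrite big1 ?add0r; last by move=> i _; rewrite lam0 // scale0r.
  by rewrite (_ : t = 1) ?scale1r //; lra.
have s_gt0 : 0 < s by rewrite lt_def s_neq0.
have Sa : S (\sum_(i < m) (lam (widen_ord (leqnSn m) i) / s) *: p (widen_ord (leqnSn m) i)).
  apply: IH => //; first by move=> k; apply: divr_ge0.
  by rewrite -mulr_suml divff.
have s01 : 0 <= s <= 1 by have := lam_ge0 ord_max; rewrite -/t s_ge0 /=; lra.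
have := cS _ _ s s01 Sa (Sp ord_max).
rewrite (_ : 1 - s = t); last by lra.
rewrite scaler_sumr; congr (S (_ + _)); apply: eq_bigr => i _.
by rewrite scalerA mulrCA mulfV // mulr1.
Qed.

Lemma polytope_convex (V : lmodType R) (S : set V) :
  polytope S -> convex_set (S : set (convex_lmodType V)).
Proof. by case=> m [p ->]; exact: convex_set_conv. Qed.

Lemma conv_linear_image (V V' : lmodType R) (f : {linear V -> V'})
    (S : set V) (T : set V') y :
  (forall p, S p -> T (f p)) -> Defs.conv S y -> Defs.conv T (f y).
Proof.
move=> ST [m [lam [p [lam_ge0 lam_sum Sp ->]]]].
exists m, lam, (f \o p); split => //=; first by move=> k; apply: ST.
by rewrite linear_sum; apply: eq_bigr => k _; rewrite linearZ.
Qed.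

Lemma conv_translate (V : lmodType R) (S : set V) (v y : V) :
  (forall p, S p -> S (p + v)) -> Defs.conv S y -> Defs.conv S (y + v).
Proof.
move=> Sv [m [lam [p [lam_ge0 lam_sum Sp ->]]]].
exists m, lam, (fun k => p k + v); split => //; first by move=> k; apply: Sv.
by rewrite (eq_bigr _ (fun k _ => scalerDr _ _ _)) big_split -scaler_suml lam_sum scale1r.
Qed.

Lemma convex_function_sum_le (V : lmodType R) (g : V -> R) m
    (lam : 'I_m -> R) (v : 'I_m -> V) :
  (forall a b (t : R), 0 <= t <= 1 -> g (t *: a + (1 - t) *: b) <= t * g a + (1 - t) * g b) ->
  (forall k, 0 <= lam k) -> \sum_(k < m) lam k = 1 ->
  g (\sum_(k < m) lam k *: v k) <= \sum_(k < m) lam k * g (v k).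
Proof.
move=> g_conv lam_ge0 lam_sum.
pose epi_g : set (V * R^o) := [set q | g q.1 <= q.2].
have epi_g_convex : convex_set (epi_g : set (convex_lmodType _)).
  apply/convex_setP => a b t t01 ga gb; apply: le_trans (g_conv _ _ _ t01) _.
  by move: t01 => /andP[t0 t1]; apply: lerD; apply: ler_wpM2l => //; lra.
have : Defs.conv epi_g (\sum_(k < m) lam k *: (v k, g (v k))).
  by exists m, lam, (fun k => (v k, g (v k))); split => // k; rewrite /epi_g /=.
move/(conv_sub_convex epi_g_convex); rewrite /epi_g /=.
by rewrite (raddf_sum fst) (raddf_sum snd).
Qed.

End ConvexHull.

Lemma lbound_infE (R : realType) (E : set R) (x : R) :
  E x -> lbound E x -> inf E = x.
Proof.
move=> Ex xlb; apply/le_anti/andP; split.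
- by apply: ge_inf Ex; exists x.
- by apply: lb_le_inf => //; exists x.
Qed.

Lemma convex_comb_affine (R : realType) (n d m : nat) (A : 'M[R]_n)
    (B : 'M[R]_(n, d)) (lam : 'I_m -> R) (a : 'I_m -> 'cV[R]_n)
    (b : 'I_m -> 'cV[R]_d) (w : 'cV[R]_n) :
  \sum_(k < m) lam k = 1 ->
  \sum_(k < m) lam k *: (A *m a k + B *m b k + w) =
  A *m (\sum_(k < m) lam k *: a k) + B *m (\sum_(k < m) lam k *: b k) + w.
Proof.
move=> lam_sum; rewrite !mulmx_sumr.
under eq_bigr do rewrite !scalerDr !scalemxAr.
by rewrite !big_split /= -scaler_suml lam_sum scale1r.
Qed.

Section RobustLyapunov.
Variables (R : realType) (n d : nat) (A : 'M[R]_n) (B : 'M[R]_(n, d)).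
Variables (X : set 'cV[R]_n) (U : set 'cV[R]_d) (W O : set 'cV[R]_n).
Variable h : 'cV[R]_n -> 'cV[R]_d -> R.
Variables (j : nat) (pi : nat -> 'cV[R]_n -> 'cV[R]_d) (x0 : nat -> 'cV[R]_n).
Variable L : nat -> 'cV[R]_n -> \bar R.

Local Notation SS i := (safe_set A B X W (pi i) (x0 i) O).
Local Notation CS := (conv_safe_set A B X W pi x0 O j).

Hypothesis L_out : forall i x, (i <= j)%N -> ~ SS i x -> L i x = +oo%E.
Hypothesis L_bellman : forall i x, (i <= j)%N -> SS i x ->
  L i x = ereal_sup [set adde (h x (pi i x))%:E (L i (A *m x + B *m pi i x + w))
                    | w in W].

Lemma epi_safe i p : (i <= j)%N -> epi (L i) p -> SS i p.1.
Proof.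
move=> ij Lp; apply: contrapT => /(L_out ij) Loo.
by move: Lp; rewrite /epi /= Loo leye_eq.
Qed.

Lemma epi_bellman i x c w : (i <= j)%N -> W w -> epi (L i) (x, c) ->
  epi (L i) (A *m x + B *m pi i x + w, c - h x (pi i x)).
Proof.
move=> ij Ww Lx; have /(L_bellman ij) Lx_sup := epi_safe ij Lx.
have : ((h x (pi i x))%:E + L i (A *m x + B *m pi i x + w) <= c%:E)%E.
  by apply: le_trans Lx; rewrite Lx_sup; apply: ereal_sup_ubound; exists w.
rewrite /epi /=; case: (L i _) => [r||] //=; rewrite ?lee_fin ?leNye //.
by move=> le_c; lra.
Qed.

Lemma conv_epi_safe y mu : conv_epi L j (y, mu) -> CS y.
Proof.
move=> ymu; apply: (conv_linear_image (f := fst) _ ymu) => p [i ij Lp].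
by exists i => //; exact: epi_safe.
Qed.

Lemma conv_epi_ge y a b : conv_epi L j (y, a) -> a <= b -> conv_epi L j (y, b).
Proof.
move=> ya ab; have -> : (y, b) = (y, a) + (0, b - a).
  by apply: injective_projections; rewrite /= ?addr0 ?subrKC.
apply: conv_translate ya => p [i ij Lp]; exists i => //.
by rewrite /epi /= addr0; apply: le_trans Lp _; rewrite lee_fin lerDl subr_ge0.
Qed.

Hypothesis pi_U : forall i x, (i <= j)%N -> SS i x -> U (pi i x).
Hypothesis U_convex : convex_set (U : set (convex_lmodType _)).
Hypothesis h_convex : forall x1 x2 u1 u2 (t : R), 0 <= t <= 1 ->
  h (t *: x1 + (1 - t) *: x2) (t *: u1 + (1 - t) *: u2)
    <= t * h x1 u1 + (1 - t) * h x2 u2.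

Lemma conv_epi_step x mu : conv_epi L j (x, mu) ->
  exists2 u, U u & forall w, W w -> conv_epi L j (A *m x + B *m u + w, mu - h x u).
Proof.
move=> [m [lam [p [lam_ge0 lam_sum Sp xmu]]]].
have /choice[ik ik_epi] : forall k, exists i, (i <= j)%N /\ epi (L i) (p k).
  by move=> k; case: (Sp k) => i ij Lp; exists i.
pose u_ k := pi (ik k) (p k).1.
pose h_ k := h (p k).1 (u_ k).
have x_eq : x = \sum_(k < m) lam k *: (p k).1.
  by have := congr1 fst xmu; rewrite /= (raddf_sum fst).
have mu_eq : mu = \sum_(k < m) lam k * (p k).2.
  by have := congr1 snd xmu; rewrite /= (raddf_sum snd).
exists (\sum_(k < m) lam k *: u_ k).
  apply: conv_sub_convex U_convex _ _; exists m, lam, u_; split => // k.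
  by have [ij Lp] := ik_epi k; apply: pi_U ij (epi_safe ij Lp).
move=> w Ww; apply: (@conv_epi_ge _ (mu - \sum_(k < m) lam k * h_ k)).
  exists m, lam, (fun k => (A *m (p k).1 + B *m u_ k + w, (p k).2 - h_ k)).
  split => //.
  - by move=> k; have [ij Lp] := ik_epi k; exists (ik k) => //; apply: epi_bellman.
  - apply: injective_projections; rewrite /= ?(raddf_sum fst) ?(raddf_sum snd) /=.
      by rewrite convex_comb_affine // -x_eq.
    by rewrite mu_eq -sumrB; apply: eq_bigr => k _; rewrite scalerBr.
have jensen := convex_function_sum_le (g := fun q => h q.1 q.2)
  (fun k => ((p k).1, u_ k)) _ lam_ge0 lam_sum.
rewrite lerD2l lerN2 x_eq; move: jensen; rewrite (raddf_sum fst) (raddf_sum snd) /=.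
by apply; move=> [x1 u1] [x2 u2] t /h_convex.
Qed.

End RobustLyapunov.

Lemma Qfun_minE (R : realType) (n : nat) (L : nat -> 'cV[R]_n -> \bar R) j x mu :
  conv_epi L j (x, mu) -> (forall mu', conv_epi L j (x, mu') -> mu <= mu') ->
  Qfun L j x = mu.
Proof. exact: lbound_infE. Qed.

Theorem proposition2 (R : realType) (n d : nat)
  (A : 'M[R]_n) (B : 'M[R]_(n, d))
  (X : set 'cV[R]_n) (U : set 'cV[R]_d) (W : set 'cV[R]_n)
  (hX : polytope X) (hU : polytope U)
  (K : 'M[R]_(d, n)) (O : set 'cV[R]_n)
  (hO : forall x w, O x -> W w -> O ((A + B *m K) *m x + w) /\ U (K *m x))
  (h : 'cV[R]_n -> 'cV[R]_d -> R)
  (h_cont : continuous (fun p : 'cV[R]_n * 'cV[R]_d => h p.1 p.2))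
  (h_conv : forall x1 x2 u1 u2 (t : R), 0 <= t <= 1 ->
     h (t *: x1 + (1 - t) *: x2) (t *: u1 + (1 - t) *: u2)
       <= t * h x1 u1 + (1 - t) * h x2 u2)
  (j : nat)
  (pi : nat -> 'cV[R]_n -> 'cV[R]_d) (F : nat -> set 'cV[R]_n)
  (x0 : nat -> 'cV[R]_n)
  (hFX : forall i, (i <= j)%N -> F i `<=` X)
  (hpiU : forall i x, (i <= j)%N ->
     (F i `|` safe_set A B X W (pi i) (x0 i) O) x -> U (pi i x))
  (hx0 : forall i, (i <= j)%N -> F i (x0 i))
  (hstab : forall i, (i <= j)%N -> forall x, F i x ->
     forall w : nat -> 'cV[R]_n, (forall k, W (w k)) ->
       (forall k, X (traj A B (pi i) x w k)) /\
       (fun t => distO O (traj A B (pi i) x w t)) @ \oo --> (0 : R))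
  (L : nat -> 'cV[R]_n -> \bar R)
  (hL_out : forall i x, (i <= j)%N ->
     ~ safe_set A B X W (pi i) (x0 i) O x -> L i x = +oo%E)
  (hL_bellman : forall i x, (i <= j)%N ->
     safe_set A B X W (pi i) (x0 i) O x ->
     L i x = ereal_sup [set adde (h x (pi i x))%:E (L i (A *m x + B *m pi i x + w))
                       | w in W])
  (hQ_min : forall x, conv_safe_set A B X W pi x0 O j x ->
     exists mu, conv_epi L j (x, mu) /\
       forall mu', conv_epi L j (x, mu') -> mu <= mu') :
  forall x, conv_safe_set A B X W pi x0 O j x ->
    exists2 u, U u & forall w, W w ->
      conv_safe_set A B X W pi x0 O j (A *m x + B *m u + w) /\
      Qfun L j (A *m x + B *m u + w) + h x u - Qfun L j x <= 0.
Proof.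
move=> x CSx.
have [mu [x_epi mu_min]] := hQ_min x CSx.
have pi_U i y : (i <= j)%N -> safe_set A B X W (pi i) (x0 i) O y -> U (pi i y).
  by move=> ij Sy; apply: hpiU ij (or_intror Sy).
have [u Uu step] :=
  conv_epi_step hL_out hL_bellman pi_U (polytope_convex hU) h_conv x_epi.
exists u => // w Ww; have succ_epi := step w Ww.
have CS_succ := conv_epi_safe hL_out succ_epi.
split => //.
have [mu' [succ_epi' mu'_min]] := hQ_min _ CS_succ.
rewrite (Qfun_minE x_epi mu_min) (Qfun_minE succ_epi' mu'_min).
by have := mu'_min _ succ_epi; lra.
Qed.
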